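(* Let $i\in\{1,2\}$. Fix $\alpha>2$, $P,\lambda_B,\gamma_{th}>0$, $\sigma^2\ge0$, $a:=\mathcal{A}_i^1\mathcal{R}_i^1\in(0,1]$, $\lambda_i^a>0$, an integer repetition number $K_i\ge4$, radii $0<D_{i-1}<D_i$, and $c=3.575$. Define $$q_i(l)=\int_{D_{i-1}}^{D_i}\exp\Big(-\frac{l\gamma_{th}\sigma^2r^\alpha}{P}-2\pi a\lambda_i^a\mathcal{F}_i(r,l)\Big)f_R(r)\,dr,\qquad \mathcal{F}_i(r,l)=\int_{D_i}^{\infty}\Big(1-\Big(\frac{1}{1+\gamma_{th}r^\alpha y^{-\alpha}}\Big)^{l}\Big)y\,dy.$$ Here either - (CE group 1, or CE group 2 in Case 1) $f_R(r)=2r/(D_i^2-D_{i-1}^2)$; or - (CE group 2 in Case 2) $D_{i-1}=D_1$, $D_i=\infty$ in the outer integral and $f_R(r)=2\pi\lambda_Br\exp(-\lambda_B\pi(r^2-D_1^2))$, with $\mathcal{F}_2(r,l)=\int_{D_1}^{\infty}\big(1-(1+\gamma_{th}r^\alpha y^{-\alpha})^{-l}\big)y\,dy$. Suppose the following: - Each device (the typical device $m=0$ and each of the $N_i$ intra-cell interferers $m=1,\dots,N_i$) transmits its preamble $K_i$ times. - Repetition $k$ succeeds (event $\theta_k$) iff all 4 of its symbol-group SINRs are $\ge\gamma_{th}$. - For every set of $k$ repetitions, the joint success probability of each device is $q_i(4k)$. - The PMF of $N_i$ is $$\mathbb{P}[N_i=n]=\frac{c^{c+1}\Gamma(n+c+1)(a\lambda_i^a/\lambda_B)^n}{\Gamma(c+1)\Gamma(n+1)(a\lambda_i^a/\lambda_B+c)^{n+c+1}}.$$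 Define $\mathbb{P}_{S,i,m}[K_i]=\mathbb{P}[\bigcup_{k=1}^{K_i}\theta_k]$ for device $m$, and $$\mathcal{P}_i^1=\sum_{n=0}^\infty\mathbb{P}[N_i=n]\,\mathbb{P}_{S,i,0}[K_i]\prod_{m=1}^{n}(1-\mathbb{P}_{S,i,m}[K_i]).$$ Then $$\mathcal{P}_i^1=\sum_{n=0}^\infty\mathbb{P}[N_i=n]\,\Theta_i(1-\Theta_i)^n,\qquad \Theta_i=\sum_{k=1}^{K_i}(-1)^{k+1}\binom{K_i}{k}q_i(4k).$$
   Context: This is the RACH model for CE groups 1 and 2 of an NB-IoT network in the first time slot; devices in these groups transmit with fixed power $P$. A RACH attempt succeeds iff the typical device's preamble is received in at least one repetition and no intra-cell device using the same preamble is also received (no collision). - The quantity $q_i(l)$ is the probability that all $l$ symbol-group SINRs exceed $\gamma_{th}$. It is computed in the model where the typical device is at distance $R\sim f_R$ from its base station and the interferers form a PPP of intensity $a\lambda_i^a$ outside radius $D_i$ (or outside $D_1$ in Case 2), with i.i.d. Exp(1) Rayleigh fading. - In the paper $D_0=(\delta_1\omega/P_{DL})^{-1/\alpha}$, $D_1=(\delta_2\omega/P_{DL})^{-1/\alpha}$ and $D_2=1/\sqrt{\pi\lambda_B}$. - $\lambda_i^a=\lambda_i/S_i$. - $\mathcal{A}_i^1$ and $\mathcal{R}_i^1$ are the non-empty-buffer and non-restriction probabilities. *)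

From HB Require Import structures.
From mathcomp Require Import all_boot all_order all_algebra.
From mathcomp Require Import all_classical all_reals all_analysis.
Set Implicit Arguments. Unset Strict Implicit. Unset Printing Implicit Defensive.
Import Order.TTheory GRing.Theory Num.Theory.
Local Open Scope classical_set_scope.
Local Open Scope ring_scope.

Section Defs.
Variable R : realType.

Definition Gamma (x : R) : R :=
  Rintegral lebesgue_measure `]0, +oo[ (fun t : R => t `^ (x - 1) * expR (- t)).

(* PMF of the number N_i of intra-cell interferers (rho := a λ_i^a / λ_B) *)
Definition pmfN (c rho : R) (n : nat) : R :=
  (c `^ (c + 1) * Gamma (n%:R + c + 1) * rho ^+ n) /
  (Gamma (c + 1) * Gamma (n%:R + 1) * (rho + c) `^ (n%:R + c + 1)).

(* Geometric configuration of the RACH model: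
   Annulus : CE group 1, or CE group 2 in Case 1
             (typical device uniform in the annulus D_lo <= r <= D_hi);
   Case2   : CE group 2 in Case 2 (D_lo = D_1, outer integral to infinity). *)
Inductive config := Annulus | Case2.

Definition Fint (alpha gth Dint r : R) (l : nat) : R :=
  Rintegral lebesgue_measure `[Dint, +oo[
    (fun y : R => (1 - (1 + gth * r `^ alpha * y `^ (- alpha))^-1 ^+ l) * y).

Definition fR (cf : config) (lamB Dlo Dhi r : R) : R :=
  match cf with
  | Annulus => 2 * r / (Dhi ^+ 2 - Dlo ^+ 2)
  | Case2 => 2 * pi * lamB * r * expR (- (lamB * pi * (r ^+ 2 - Dlo ^+ 2)))
  end.

Definition Fi (cf : config) (alpha gth Dlo Dhi r : R) (l : nat) : R :=
  match cf with
  | Annulus => Fint alpha gth Dhi r l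
  | Case2 => Fint alpha gth Dlo r l
  end.

Definition outer_dom (cf : config) (Dlo Dhi : R) : set R :=
  match cf with
  | Annulus => `[Dlo, Dhi]
  | Case2 => `[Dlo, +oo[
  end.

(* q_i(l): probability that all l symbol-group SINRs exceed γ_th *)
Definition q (cf : config) (alpha P lamB gth sigma2 a lamA Dlo Dhi : R)
    (l : nat) : R :=
  Rintegral lebesgue_measure (outer_dom cf Dlo Dhi)
    (fun r : R =>
       expR (- (l%:R * gth * sigma2 * r `^ alpha / P)
             - 2 * pi * a * lamA * Fi cf alpha gth Dlo Dhi r l)
       * fR cf lamB Dlo Dhi r).

Definition Theta (qf : nat -> R) (K : nat) : R :=
  \sum_(1 <= k < K.+1) (-1) ^+ k.+1 * 'C(K, k)%:R * qf (4 * k)%N.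

End Defs.

From HB Require Import structures.
From mathcomp Require Import all_boot all_order all_algebra.
From mathcomp Require Import all_classical all_reals all_analysis.
Set Implicit Arguments.
Unset Strict Implicit.
Unset Printing Implicit Defensive.
Import Order.TTheory GRing.Theory Num.Theory.
Local Open Scope classical_set_scope.
Local Open Scope ring_scope.

(* Expanding [1 - 1_(U_k A_k) = prod_k (1 - 1_(A_k))] gives inclusion-exclusion
   for indicators, hence for finite measures after integration.  When the measure
   of an intersection of [j] of the events depends only on [j] (here every device's
   [j] repetitions all succeed with probability q_i(4j)), grouping the subsets by
   size yields the same success probability Theta_i for every device, so the
   product over the [n] interferers is (1 - Theta_i)^n. *)

Section IndicatorInclusionExclusion.
Variables (R : pzRingType) (T : Type) (K : nat) (A : 'I_K -> set T).

Lemma prod_indic (J : {set 'I_K}) x :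
  \prod_(i in J) (\1_(A i) x : R) = \1_(\big[setI/setT]_(i in J) A i) x.
Proof.
by elim/big_rec2: _ => [|i y S _ ->]; rewrite ?indicT ?indicI.
Qed.

Lemma prod_indicC x :
  \prod_(i < K) (1 - \1_(A i) x : R) = 1 - \1_(\big[setU/set0]_(i < K) A i) x.
Proof.
elim/big_rec2: _ => [|i S y _ ->]; first by rewrite indic0 subr0.
rewrite !indicE in_setU.
by case: (x \in A i); case: (x \in S); rewrite /= ?subrr ?subr0 ?mul0r ?mulr0 ?mulr1.
Qed.

Lemma indic_bigsetU_inclusion_exclusion x :
  \1_(\big[setU/set0]_(i < K) A i) x =
  \sum_(J : {set 'I_K} | (0 < #|J|)%N)
     (-1) ^+ #|J|.+1 * \1_(\big[setI/setT]_(i in J) A i) x :> R.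
Proof.
have prod_expand : \prod_(i < K) (1 - \1_(A i) x : R) =
    \sum_(J : {set 'I_K}) (-1) ^+ #|J| * \1_(\big[setI/setT]_(i in J) A i) x.
  under eq_bigr do rewrite addrC.
  rewrite bigA_distr; apply: eq_bigr => J _.
  by rewrite -big_mkcond /= prodrN prod_indic.
rewrite prod_indicC (bigD1 finset.set0) //= cards0 big_set0 indicT mul1r in prod_expand.
rewrite (eq_bigl (fun J : {set 'I_K} => 0 < #|J|)%N) /= in prod_expand; last first.
  by move=> J; rewrite lt0n cards_eq0.
under [RHS]eq_bigr do rewrite exprS mulN1r mulNr.
by rewrite sumrN -(addKr 1 (\sum_(_ | _) _)) -prod_expand addKr opprK.
Qed.

End IndicatorInclusionExclusion.

Lemma sum_set_card (R : pzSemiRingType) (K : nat) (P : pred nat) (g : nat -> R) :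
  \sum_(J : {set 'I_K} | P #|J|) g #|J| =
  \sum_(k < K.+1 | P k) 'C(K, k)%:R * g k.
Proof.
have cardJ (J : {set 'I_K}) : (#|J| < K.+1)%N.
  by rewrite ltnS -[X in (_ <= X)%N]card_ord max_card.
rewrite (partition_big (fun J : {set 'I_K} => inord #|J| : 'I_K.+1) (fun k => P k)) /=;
  last by move=> J PJ; rewrite inordK.
apply: eq_bigr => k Pk.
rewrite (eq_big (fun J : {set 'I_K} => #|J| == k) (fun _ => g k)); last first.
- by move=> J /andP[_ /eqP <-]; rewrite inordK.
- by move=> J; rewrite -val_eqE /= inordK //; case: eqP => [->|_]; rewrite ?Pk ?andbF.
by rewrite sumr_const mulr_natl -cardsE card_draws card_ord.
Qed.

Section MeasureInclusionExclusion.
Context d (T : measurableType d) (R : realType).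
Variables (mu : {finite_measure set T -> \bar R}) (K : nat) (A : 'I_K -> set T).
Hypothesis mA : forall k, measurable (A k).

Lemma measure_bigsetU_inclusion_exclusion :
  mu (\big[setU/set0]_(k < K) A k) =
  (\sum_(J : {set 'I_K} | (0 < #|J|)%N)
     ((-1) ^+ #|J|.+1)%:E * mu (\big[setI/setT]_(k in J) A k))%E.
Proof.
have mI (J : {set 'I_K}) : measurable (\big[setI/setT]_(k in J) A k).
  exact: bigsetI_measurable.
rewrite -[X in mu X]setIT -integral_indic //; last exact: bigsetU_measurable.
under eq_integral do
  rewrite indic_bigsetU_inclusion_exclusion -sumEFin (eq_bigr _ (fun J _ => EFinM _ _)).
rewrite integral_sum //; last by move=> J; apply/integrableZl/integrable_indic.
apply: eq_bigr => J _.
by rewrite integralZl ?integral_indic ?setIT //; apply: integrable_indic.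
Qed.

Lemma measure_bigsetU_exchangeable (p : nat -> R) :
  (forall J : {set 'I_K}, (0 < #|J|)%N ->
     mu (\big[setI/setT]_(k in J) A k) = (p #|J|)%:E) ->
  mu (\big[setU/set0]_(k < K) A k) =
  (\sum_(1 <= k < K.+1) (-1) ^+ k.+1 * 'C(K, k)%:R * p k)%:E.
Proof.
move=> mu_bigcap; rewrite measure_bigsetU_inclusion_exclusion.
under eq_bigr => J J_gt0 do rewrite mu_bigcap // -EFinM.
rewrite sumEFin (sum_set_card K (fun k => 0 < k)%N (fun k => (-1) ^+ k.+1 * p k)).
rewrite big_mkcond big_ord_recl /= add0r big_add1 big_mkord.
by congr EFin; apply: eq_bigr => k _; rewrite /bump add1n mulrCA mulrA.
Qed.

End MeasureInclusionExclusion.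

Theorem theorem2 (R : realType) (d : measure_display) (T : measurableType d)
    (Pr : probability T R) (i : nat) (cf : config)
    (alpha P lamB gth sigma2 a lamA Dlo Dhi c : R) (K : nat)
    (theta : nat -> 'I_K -> set T) :
    (i = 1 \/ i = 2)%N ->
    (cf = Case2 -> i = 2%N) ->
    2 < alpha -> 0 < P -> 0 < lamB -> 0 < gth -> 0 <= sigma2 ->
    0 < a <= 1 -> 0 < lamA -> (4 <= K)%N -> 0 < Dlo < Dhi ->
    c = 3575 / 1000 ->
    (* θ_k for device m (m = 0 typical, m >= 1 interferers), repetition k *)
    (forall m k, measurable (theta m k)) ->
    (* joint success probability of any k repetitions of each device is q_i(4k) *)
    (forall m (S : {set 'I_K}), (0 < #|S|)%N ->
       Pr (\big[setI/setT]_(k in S) theta m k) =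
       (q cf alpha P lamB gth sigma2 a lamA Dlo Dhi (4 * #|S|)%N)%:E) ->
    let PS m := fine (Pr (\big[setU/set0]_(k < K) theta m k)) in
    let Th := Theta (q cf alpha P lamB gth sigma2 a lamA Dlo Dhi) K in
    limn (fun N => \sum_(0 <= n < N)
            (pmfN c (a * lamA / lamB) n * PS 0%N *
             \prod_(1 <= m < n.+1) (1 - PS m))) =
    limn (fun N => \sum_(0 <= n < N)
            (pmfN c (a * lamA / lamB) n * Th * (1 - Th) ^+ n)).
Proof.
move=> _ _ _ _ _ _ _ _ _ _ _ _ mtheta joint PS Th.
set qi := q cf alpha P lamB gth sigma2 a lamA Dlo Dhi in joint.
have PS_Th m : PS m = Th.
  rewrite /PS.
  by rewrite (measure_bigsetU_exchangeable (mtheta m) (p := fun k => qi (4 * k)%N) (joint m)).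
congr (limn _); apply/funext => N; apply: eq_bigr => n _.
under eq_bigr do rewrite PS_Th.
by rewrite PS_Th prodr_const_nat subn1.
Qed.
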